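(* The language $L_1=\{\,a^n b^{n+\lfloor \sqrt{n} \rfloor} \mid n \ge 1\,\}$ belongs to $\mathscr{L}_{rt}(\mathrm{MC\text{-}OCA}(1))$, i.e., it is accepted by some real-time one-way cellular automaton that is max communication bounded by a constant.
   Context: A cellular automaton (CA) is a system $\langle S,F,A,B,\#,b_l,b_r,\delta\rangle$ with finite nonempty state set $S$, accepting states $F\subseteq S$, nonempty input alphabet $A\subseteq S$, set $B$ of communication symbols, boundary symbol $\#\notin B$, communication functions $b_l,b_r:S\to B\cup\{\bot\}$ (information sent to the left/right neighbor; $\bot$ means nothing is sent), and local transition function $\delta:(B\cup\{\#,\bot\})\times S\times(B\cup\{\#,\bot\})\to S$. On input $w=a_1\cdots a_n\in A^+$ the array has cells $1,\dots,n$, initial configuration $c_0(i)=a_i$, and $c_{t+1}(i)=\delta(b_r(c_t(i-1)),c_t(i),b_l(c_t(i+1)))$ for $2\le i\le n-1$; the leftmost cell receives $\#$ from the left at the first step and $\bot$ afterwards, symmetrically for the rightmost cell. The input is accepted if at some time the leftmost cell enters a state in $F$. The device has time complexity $t$ if every accepted $w$ is accepted within $t(|w|)$ steps; real time means $t(n)=n$. A one-way CA (OCA) is a CA in which $b_r$ maps every state to $\bot$ and the leftmost cell does not receive the boundary symbol. The number of communications between cells $i$ and $i+1$ up to time $t$ is $\mathrm{com}(i,t)=|\{j: 0\le j<t,\ b_r(c_j(i))\ne\bot \text{ or } b_l(c_j(i+1))\ne\bot\}|$. For a device of time complexity $t$, $\mathrm{mcom}(w)=\max_{1\le i\le |w|-1}\mathrm{com}(i,t(|w|))$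 and $\mathrm{scom}(w)=\sum_{i=1}^{|w|-1}\mathrm{com}(i,t(|w|))$. A device is max (resp. sum) communication bounded by $f$ if every accepted $w$ is accepted with a computation having $\mathrm{mcom}(w)\le f(|w|)$ (resp. $\mathrm{scom}(w)\le f(|w|)$). $\mathrm{MC\text{-}OCA}(f)$ (resp. $\mathrm{SC\text{-}OCA}(f)$, $\mathrm{MC\text{-}CA}(f)$) denotes OCAs (resp. OCAs, CAs) that are max (resp. sum, max) communication bounded by some $g\in O(f)$. $\mathscr{L}_{rt}(X)$ is the family of languages accepted by real-time devices of type $X$. *)

From mathcomp Require Import all_boot.
Set Implicit Arguments. Unset Strict Implicit. Unset Printing Implicit Defensive.

(* Messages received by a cell: nothing (bot), the boundary symbol #,
   or a communication symbol from B (so # is not in B by construction). *)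
Variant msg (B : Type) := Bot | Hash | Sym of B.
Arguments Bot {B}. Arguments Hash {B}.

Definition lift_msg (B : Type) (o : option B) : msg B :=
  match o with Some x => Sym x | None => Bot end.

(* A cellular automaton with input alphabet Sigma embedded (injectively)
   into the finite state set: <S,F,A,B,#,b_l,b_r,delta>.
   None encodes "bot" for the communication functions. *)
Record CA (Sigma : Type) := {
  st : finType;
  bsym : finType;
  acc : pred st;
  inp : Sigma -> st;
  inp_inj : injective inp;
  bl : st -> option bsym;
  br : st -> option bsym;
  delta : msg bsym -> st -> msg bsym -> st
}.

Arguments acc {Sigma} c _.
Arguments inp {Sigma} c _.
Arguments bl {Sigma} c _.
Arguments br {Sigma} c _.
Arguments delta {Sigma} c _ _ _.

Section Semantics.
Variables (Sigma : Type) (M : CA Sigma).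

(* [twoway = false] is the one-way semantics: the leftmost cell does not
   receive the boundary symbol. Cells are numbered 0 .. n-1. *)
Definition left_in (twoway : bool) (c : nat -> st M) (t i : nat) : msg (bsym M) :=
  if i == 0 then (if twoway && (t == 0) then Hash else Bot)
  else lift_msg (br M (c i.-1)).

Definition right_in (n : nat) (c : nat -> st M) (t i : nat) : msg (bsym M) :=
  if i == n.-1 then (if t == 0 then Hash else Bot)
  else lift_msg (bl M (c i.+1)).

Fixpoint conf (twoway : bool) (x : Sigma) (w : seq Sigma) (t : nat) : nat -> st M :=
  match t with
  | 0 => fun i => inp M (nth x (x :: w) i)
  | t'.+1 =>
      let c := conf twoway x w t' in
      fun i => delta M (left_in twoway c t' i) (c i) (right_in (size w).+1 c t' i)
  end.

(* accepted within T steps: the leftmost cell enters an accepting state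
   at some time t <= T. Empty input is never accepted (inputs are in A^+). *)
Definition accepts_within (twoway : bool) (w : seq Sigma) (T : nat) : Prop :=
  match w with
  | [::] => False
  | x :: w' => exists2 t, t <= T & acc M (conf twoway x w' t 0)
  end.

Definition accepts (twoway : bool) (w : seq Sigma) : Prop :=
  exists T, accepts_within twoway w T.

Definition realtime (twoway : bool) : Prop :=
  forall w, accepts twoway w -> accepts_within twoway w (size w).

(* com(i,T) for the boundary between cells i and i+1 (0-indexed) *)
Definition com (twoway : bool) (x : Sigma) (w : seq Sigma) (i T : nat) : nat :=
  count (fun j => isSome (br M (conf twoway x w j i)) ||
                  isSome (bl M (conf twoway x w j i.+1))) (iota 0 T).

Definition mcom (twoway : bool) (tc : nat -> nat) (w : seq Sigma) : nat :=
  match w with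
  | [::] => 0
  | x :: w' => \max_(i < size w') com twoway x w' i (tc (size w))
  end.

(* one-way CA: b_r is constantly bot (and the one-way semantics is used) *)
Definition is_OCA : Prop := forall s, br M s = None.

End Semantics.

Variant ab := ab_a | ab_b.

Definition L1 (w : seq ab) : Prop :=
  exists2 n, 1 <= n & w = nseq n ab_a ++ nseq (n + Nat.sqrt n) ab_b.

From HB Require Import structures.
From Stdlib Require PeanoNat.
From mathcomp Require Import all_boot zify.
Set Implicit Arguments. Unset Strict Implicit. Unset Printing Implicit Defensive.

(* In a one-way array cell i at time t knows at most
   the window w[i..i+t] of the input.  We build an automaton whose cell state
   is exactly a function [window_state] of that window (plus an end flag,
   set once the right border signal # has arrived), so the whole
   computation is described by the recurrence [window_rec]
       window_state u = cell_step (window_state (front u))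
                                  (cell_signal (window_state (behead u))).  A window a^p b^q (p >= 1) is a "row p" at "time" q.  Row p emits
   three signals, at q = evG p, evB p, evC p, and computes them from the
   signals of row p-1 (its right neighbour) with timers of delay <= 4;
   [events_params] is the arithmetic of floor(sqrt) behind these delays.
   Since evG p = p + floor(sqrt p) + 1, the word a^n b^m is in L_1 iff
   row n fires its G signal on the window a^n b^(m+1); the leftmost cell
   sees this window (the end-padded word) at time n + m, in real time.
   Each cell talks to its left neighbour only at time 0, at the three
   event times and once at the end, whence max communication <= 5. *)

Definition evG (p : nat) : nat := p + Nat.sqrt p + 1.
Definition evB (p : nat) : nat := Nat.sqrt p * Nat.sqrt p + 3 * Nat.sqrt p + 1.
Definition evC (p : nat) : nat := p + 3 * Nat.sqrt p + 1.

Record events := Events { eg : nat; eb : nat; ec : nat }.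

Definition events_of (p : nat) : events := Events (evG p) (evB p) (evC p).

(* How the events of a row follow from those of the previous row: the
   delays depend only on whether G and B of the previous row coincide,
   which happens exactly when the square root is about to increase. *)
Definition row_params (e0 e1 : events) : Prop :=
  [/\ 0 < eg e0 <= eb e0, eb e0 <= ec e0 &
      if eg e0 == eb e0 then e1 = Events (eg e0 + 2) (ec e0 + 4) (ec e0 + 4)
      else e1 = Events (eg e0 + 1) (eb e0) (ec e0 + 1)].

Lemma sqrt_succ k :
  (Nat.sqrt k.+1 = Nat.sqrt k /\ k.+2 <= (Nat.sqrt k).+1 * (Nat.sqrt k).+1) \/
  (Nat.sqrt k.+1 = (Nat.sqrt k).+1 /\ k.+1 = (Nat.sqrt k).+1 * (Nat.sqrt k).+1).
Proof.
have [lo hi] := PeanoNat.Nat.sqrt_spec' k; move: (Nat.sqrt k) lo hi => s lo hi.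
have [lt|ge] := ltnP k.+1 (s.+1 * s.+1).
- by left; split; [apply: PeanoNat.Nat.sqrt_unique; lia | lia].
- right; have e : k.+1 = s.+1 * s.+1 by lia.
  by split => //; apply: PeanoNat.Nat.sqrt_unique; rewrite e; lia.
Qed.

Lemma events_params k : row_params (events_of k) (events_of k.+1).
Proof.
have [lo hi] := PeanoNat.Nat.sqrt_spec' k.
rewrite /row_params /events_of /evG /evB /evC /=.
have [[-> step]|[-> step]] := sqrt_succ k; move: (Nat.sqrt k) lo hi step => s lo hi step;
  split; try lia; case: eqP => e; congr Events; lia.
Qed.

(* A timer of a row: [Idle] before being triggered, [Tick k] fires k steps
   later, [Hold] waits for a second trigger, [Done] after firing. *)
Inductive timer := Idle | Hold | Done | Tick0 | Tick1 | Tick2 | Tick3 | Tick4.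

(* The abstract content of a cell: a single letter (time 0), a window of
   b's only, an ill-formed window, or a row with its square flag and the
   timers of its G, B and C events. *)
Inductive cell := LetterA | LetterB | OnlyB | Garbage | Row of bool & timer & timer & timer.

Inductive signal := SigA | SigGarbage | SigEvents of bool & bool & bool.

Definition timer_code (t : timer) : 'I_8 :=
  inord (match t with Idle => 0 | Hold => 1 | Done => 2 | Tick0 => 3 | Tick1 => 4
         | Tick2 => 5 | Tick3 => 6 | Tick4 => 7 end).
Definition timer_decode (i : 'I_8) : timer :=
  match nat_of_ord i with 0 => Idle | 1 => Hold | 2 => Done | 3 => Tick0 | 4 => Tick1
  | 5 => Tick2 | 6 => Tick3 | _ => Tick4 end.
Lemma timer_codeK : cancel timer_code timer_decode.
Proof. by case; rewrite /timer_decode /timer_code inordK. Qed.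
HB.instance Definition _ := Finite.copy timer (can_type timer_codeK).

Definition cell_code (c : cell) : ('I_4 + bool * timer * timer * timer)%type :=
  match c with LetterA => inl (inord 0) | LetterB => inl (inord 1) | OnlyB => inl (inord 2)
  | Garbage => inl (inord 3) | Row sq g b c => inr (sq, g, b, c) end.
Definition cell_decode (x : ('I_4 + bool * timer * timer * timer)%type) : cell :=
  match x with
  | inl i => match nat_of_ord i with 0 => LetterA | 1 => LetterB | 2 => OnlyB | _ => Garbage end
  | inr (sq, g, b, c) => Row sq g b c end.
Lemma cell_codeK : cancel cell_code cell_decode.
Proof. by case=> //= *; rewrite inordK. Qed.
HB.instance Definition _ := Finite.copy cell (can_type cell_codeK).

Definition signal_code (m : signal) : (bool + bool * bool * bool)%type :=
  match m with SigA => inl true | SigGarbage => inl false | SigEvents x y z => inr (x, y, z) end.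
Definition signal_decode (x : (bool + bool * bool * bool)%type) : signal :=
  match x with inl true => SigA | inl false => SigGarbage | inr (x, y, z) => SigEvents x y z end.
Lemma signal_codeK : cancel signal_code signal_decode.
Proof. by case=> //= *. Qed.
HB.instance Definition _ := Finite.copy signal (can_type signal_codeK).

Definition tick (n : nat) : timer :=
  match n with 0 => Tick0 | 1 => Tick1 | 2 => Tick2 | 3 => Tick3 | _ => Tick4 end.
Definition tick_down (t : timer) : timer :=
  match t with Tick0 => Done | Tick1 => Tick0 | Tick2 => Tick1 | Tick3 => Tick2
  | Tick4 => Tick3 | t => t end.
Definition firing (t : timer) : bool := if t is Tick0 then true else false.

(* One step of a row, given which events of the previous row fire now:
   G triggers the own G (delay 1, or 2 if G and B coincide, which is
   recorded in the square flag); B triggers the own B at once, or in the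
   square case holds until C and then waits 4; C triggers the own C
   (delay 1, or 4 in the square case). *)
Definition row_step (sq : bool) (g b c : timer) (fg fb fc : bool) : cell :=
  let sq' := if fg then fb else sq in
  Row sq'
    (if fg then tick (if fb then 2 else 1) else tick_down g)
    (if sq' && fc then Tick4 else if fb then (if sq' then Hold else Tick0) else tick_down b)
    (if fc then tick (if sq' then 4 else 1) else tick_down c).

Definition idle_row : cell := Row false Idle Idle Idle.

Definition signal_of (x y z : bool) : option signal :=
  if [|| x, y | z] then Some (SigEvents x y z) else None.

Definition signal_flags (m : option signal) : bool * bool * bool :=
  if m is Some (SigEvents x y z) then (x, y, z) else (false, false, false).

(* Transition of a cell given the signal of its right neighbour: garbage
   is absorbing and contagious, "b then a" is garbage, "b then b" only
   b's, and an 'a' starts (or continues) a row. *)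
Definition cell_step (c : cell) (m : option signal) : cell :=
  match c, m with
  | Garbage, _ | _, Some SigGarbage | LetterB, Some SigA => Garbage
  | LetterB, _ | OnlyB, _ => OnlyB
  | LetterA, _ => let: (x, y, z) := signal_flags m in row_step false Idle Idle Idle x y z
  | Row sq g b c, _ => let: (x, y, z) := signal_flags m in row_step sq g b c x y z
  end.

Definition cell_signal (c : cell) : option signal :=
  match c with
  | LetterA => Some SigA
  | LetterB => Some (SigEvents true true true)
  | OnlyB => None
  | Garbage => Some SigGarbage
  | Row _ g b c => signal_of (firing g) (firing b) (firing c)
  end.

Lemma cell_step_garbage c : cell_step c (Some SigGarbage) = Garbage.
Proof. by case: c. Qed.

Lemma cell_step_row sq g b c x y z :
  cell_step (Row sq g b c) (signal_of x y z) = row_step sq g b c x y z.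
Proof. by case: x; case: y; case: z. Qed.

Lemma cell_step_letterA m : cell_step LetterA m = cell_step idle_row m.
Proof. by case: m => [[]|]. Qed.

(* Closed form of a timer triggered at time e and firing at time f. *)
Definition timer_at (e f q : nat) : timer :=
  if q < e then Idle else if q <= f then tick (f - q) else Done.

Definition btimer_at (e0 e1 : events) (q : nat) : timer :=
  if (eg e0 == eb e0) && (eb e0 <= q < ec e0) then Hold else timer_at (eb e0) (eb e1) q.

(* Closed form of row p at time q, given the events e0 of row p-1 and e1
   of row p. *)
Definition row_at (e0 e1 : events) (q : nat) : cell :=
  Row ((eg e0 <= q) && (eg e0 == eb e0))
      (timer_at (eg e0) (eg e1) q) (btimer_at e0 e1 q) (timer_at (ec e0) (ec e1) q).

Ltac timer_cases := repeat (simpl; first [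
    match goal with |- context [?x == ?y] => case: (@eqP _ x y) => ? end
  | match goal with |- context [?x <= ?y] => case: (leqP x y) => ? end
  | match goal with |- context [tick (?n - ?m)] =>
       let E := fresh "E" in case E: (n - m) => [|[|[|[|[|?]]]]] end ];
  try (exfalso; lia)); try reflexivity.

Lemma timer_at_step e f q : e <= f <= e + 4 ->
  timer_at e f q.+1 = if q.+1 == e then tick (f - e) else tick_down (timer_at e f q).
Proof. move=> /andP[ef fe]; rewrite /timer_at; timer_cases. Qed.

Lemma firing_timer_at e f q : e <= f -> firing (timer_at e f q) = (q == f).
Proof. by move=> ef; rewrite /timer_at; timer_cases. Qed.

Lemma row_paramsE g0 b0 c0 g1 b1 c1 :
  row_params (Events g0 b0 c0) (Events g1 b1 c1) ->
  [/\ 0 < g0 <= b0, b0 <= c0 &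
      if g0 == b0 then [/\ g1 = g0 + 2, b1 = c0 + 4 & c1 = c0 + 4]
      else [/\ g1 = g0 + 1, b1 = b0 & c1 = c0 + 1]].
Proof. by case=> /= ? ?; case: ifP => _ [= -> -> ->]; split. Qed.

Lemma btimer_at_step e0 e1 q : row_params e0 e1 ->
  btimer_at e0 e1 q.+1 =
  let sq' := (eg e0 <= q.+1) && (eg e0 == eb e0) in
  if sq' && (q.+1 == ec e0) then Tick4
  else if q.+1 == eb e0 then (if sq' then Hold else Tick0) else tick_down (btimer_at e0 e1 q).
Proof.
case: e0 e1 => g0 b0 c0 [g1 b1 c1] /row_paramsE [/andP[g0_gt0 gb] bc].
rewrite /btimer_at /timer_at /=.
by case: (eqVneq g0 b0) => [<-|ne]; rewrite ?eqxx ?(negPf ne) => -[? ? ?]; subst; timer_cases.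
Qed.

Lemma row_at0 e0 e1 : row_params e0 e1 -> row_at e0 e1 0 = idle_row.
Proof.
case: e0 e1 => g0 b0 c0 [g1 b1 c1] /row_paramsE [/andP[g0_gt0 gb] bc _].
by rewrite /row_at /btimer_at /timer_at; timer_cases.
Qed.

Lemma row_at_step e0 e1 q : row_params e0 e1 ->
  row_at e0 e1 q.+1 =
  cell_step (row_at e0 e1 q) (signal_of (q.+1 == eg e0) (q.+1 == eb e0) (q.+1 == ec e0)).
Proof.
move=> params; rewrite /row_at cell_step_row /row_step -/(row_at e0 e1 q) (btimer_at_step q params).
move: params; case: e0 e1 => g0 b0 c0 [g1 b1 c1] /row_paramsE [/andP[g0_gt0 gb] bc] /=.
have sq_step : (if q.+1 == g0 then q.+1 == b0 else (g0 <= q) && (g0 == b0))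
             = (g0 <= q.+1) && (g0 == b0).
  by case: (eqVneq q.+1 g0) => [<-|ne]; rewrite ?leqnn //; congr (_ && _); apply/idP/idP; lia.
rewrite sq_step; case: (eqVneq g0 b0) => [<-|ne]; rewrite ?eqxx ?(negPf ne) => -[? ? ?]; subst.
- rewrite !timer_at_step ?andbT; [|lia..].
  by congr Row; case: ifP => // /eqP e; rewrite addKn ?e ?eqxx // (leq_trans gb bc).
- rewrite !timer_at_step ?andbF; [|lia..].
  by congr Row; case: ifP => // /eqP e; rewrite addKn ?e // (negPf ne).
Qed.

Lemma row_at_signal e0 e1 q : row_params e0 e1 ->
  cell_signal (row_at e0 e1 q) = signal_of (q == eg e1) (q == eb e1) (q == ec e1).
Proof.
case: e0 e1 => g0 b0 c0 [g1 b1 c1] /row_paramsE [/andP[g0_gt0 gb] bc].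
rewrite /= /btimer_at; case: (eqVneq g0 b0) => [<-|ne]; rewrite ?eqxx ?(negPf ne) => -[? ? ?]; subst;
  rewrite /= !firing_timer_at; try lia.
- case: ifP => [/andP[_ lt]|_]; last by rewrite firing_timer_at //; lia.
  by have -> : (q == c0 + 4) = false by apply/eqP; lia.
- by [].
Qed.

(* Windows of the input *)

Definition is_a (x : ab) : bool := if x is ab_a then true else false.

(* Order a < b on letters; the sorted words are exactly a^p b^q. *)
Definition ab_le (x y : ab) : bool := is_a x || ~~ is_a y.

Definition ab_word (p q : nat) : seq ab := nseq p ab_a ++ nseq q ab_b.

Definition front (T : Type) (u : seq T) : seq T := take (size u).-1 u.

Lemma size_ab_word p q : size (ab_word p q) = p + q.
Proof. by rewrite size_cat !size_nseq. Qed.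

Lemma count_ab_word p q :
  count is_a (ab_word p q) = p /\ count (predC is_a) (ab_word p q) = q.
Proof. by rewrite /ab_word !count_cat !count_nseq /=; split; lia. Qed.

Lemma ab_word_inj p q p' q' : ab_word p q = ab_word p' q' -> p = p' /\ q = q'.
Proof.
move=> e; have [ca cb] := count_ab_word p q; have [ca' cb'] := count_ab_word p' q'.
by rewrite e in ca cb; split; congruence.
Qed.

Lemma sorted_ab_word p q : sorted ab_le (ab_word p q).
Proof.
rewrite /ab_word; elim: p => [|p IH] /=; first by case: q => //=; elim.
by move: IH; case: (nseq p ab_a ++ nseq q ab_b).
Qed.

Lemma sorted_ab_wordE u : sorted ab_le u -> u = ab_word (count is_a u) (count (predC is_a) u).
Proof.
elim: u => [|x s IH] //= sorted_xs.
have {}IH := IH (path_sorted sorted_xs).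
case: x sorted_xs => /= sorted_xs; first by rewrite {1}IH.
have no_a : count is_a s = 0 by move: sorted_xs; rewrite {1}IH /ab_word; case: (count is_a s).
by rewrite no_a {1}IH no_a.
Qed.

Lemma ab_word_b p q : ab_word p q.+1 = rcons (ab_word p q) ab_b.
Proof. by rewrite /ab_word -cats1 -catA; congr (_ ++ _); elim: q => //= q ->. Qed.

Lemma ab_word_a p : ab_word p.+1 0 = rcons (ab_word p 0) ab_a.
Proof. by rewrite /ab_word !cats0 -cats1; elim: p => //= p ->. Qed.

Lemma front_rcons (T : Type) (u : seq T) y : front (rcons u y) = u.
Proof. by rewrite /front size_rcons -cats1 take_size_cat. Qed.

Lemma front_take (T : Type) k (s : seq T) : k < size s -> front (take k.+1 s) = take k s.
Proof. by move=> lt; rewrite /front size_takel // take_takel. Qed.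

Lemma behead_take (T : Type) k (s : seq T) : behead (take k.+1 s) = take k (behead s).
Proof. by case: s. Qed.

Lemma behead_drop (T : Type) i (s : seq T) : behead (drop i s) = drop i.+1 s.
Proof. by rewrite -drop1 drop_drop add1n. Qed.

Lemma drop_last_elem (T : Type) (x : T) s : drop (size s) (x :: s) = [:: last x s].
Proof. by elim: s x => //= y s IH x; rewrite -IH. Qed.

Lemma take_ab_word t p q : take t (ab_word p q) = ab_word (minn t p) (minn (t - p) q).
Proof.
rewrite /ab_word take_cat size_nseq; case: ltnP => [lt|ge].
- by rewrite take_nseq ?(ltnW lt) // (_ : t - p = 0) ?min0n ?cats0 //; lia.
- congr (_ ++ _); case: (leqP (t - p) q) => h.
  + by rewrite take_nseq // (minn_idPl h).
  + by rewrite take_oversize ?size_nseq ?(ltnW h) // (minn_idPr (ltnW h)).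
Qed.

Lemma drop_ab_word k p q : drop k (ab_word p q) = ab_word (p - k) (q - (k - p)).
Proof.
rewrite /ab_word drop_cat size_nseq; case: ltnP => [lt|ge].
- by rewrite drop_nseq (_ : k - p = 0) ?subn0 //; lia.
- by rewrite drop_nseq (_ : p - k = 0) //; lia.
Qed.

Definition letter_cell (x : ab) : cell := if x is ab_a then LetterA else LetterB.

(* Content of a window a^p b^q with p + q >= 2: a row if p >= 1. *)
Definition block_cell (p q : nat) : cell :=
  if p is p'.+1 then row_at (events_of p') (events_of p) q else OnlyB.

Lemma row_start p : row_at (events_of p) (events_of p.+1) 0 = idle_row.
Proof. exact: row_at0 (events_params p). Qed.

Lemma row_signal p q : cell_signal (row_at (events_of p) (events_of p.+1) q) =
  signal_of (q == evG p.+1) (q == evB p.+1) (q == evC p.+1).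
Proof. exact: row_at_signal (events_params p). Qed.

Lemma row_next p q : row_at (events_of p) (events_of p.+1) q.+1 =
  cell_step (row_at (events_of p) (events_of p.+1) q)
            (signal_of (q.+1 == evG p) (q.+1 == evB p) (q.+1 == evC p)).
Proof. exact: row_at_step (events_params p). Qed.

Definition window_state (u : seq ab) : cell :=
  match u with
  | [::] => OnlyB
  | [:: x] => letter_cell x
  | _ => if sorted ab_le u then block_cell (count is_a u) (count (predC is_a) u) else Garbage
  end.

Lemma window_state_long u : 2 <= size u ->
  window_state u = if sorted ab_le u then block_cell (count is_a u) (count (predC is_a) u)
                   else Garbage.
Proof. by case: u => [|x [|y s]]. Qed.

Lemma window_ab_word p q : 2 <= p + q -> window_state (ab_word p q) = block_cell p q.
Proof.
move=> long; rewrite window_state_long ?size_ab_word // sorted_ab_word.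
by have [-> ->] := count_ab_word p q.
Qed.

Lemma signal_ab_word p q : 0 < q ->
  cell_signal (window_state (ab_word p q)) = signal_of (q == evG p) (q == evB p) (q == evC p).
Proof.
case: p => [|p] q_gt0.
- by case: q q_gt0 => [|[|q]] // _; rewrite window_ab_word.
- by rewrite window_ab_word; [exact: row_signal | lia].
Qed.

Lemma signal_ab_word_events p q : 2 <= p + q ->
  cell_signal (window_state (ab_word p q)) != None ->
  [/\ 0 < p, 0 < q & [|| q == evG p, q == evB p | q == evC p]].
Proof.
move=> long; rewrite window_ab_word //.
case: p long => [|p] //; case: q => [|q] long; rewrite /block_cell.
- by rewrite row_start.
- by rewrite row_signal // /signal_of; case: ifP.
Qed.

Lemma step_ab_word p q m : cell_step (window_state (ab_word p.+1 q)) m =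
                            cell_step (row_at (events_of p) (events_of p.+1) q) m.
Proof.
have [/eqP|pos] := posnP (p + q); last by rewrite window_ab_word //; lia.
by rewrite addn_eq0 => /andP[/eqP-> /eqP->]; rewrite row_start cell_step_letterA.
Qed.

Lemma window_rec_ab_word p q : 2 <= p + q ->
  window_state (ab_word p q) =
  cell_step (window_state (front (ab_word p q))) (cell_signal (window_state (behead (ab_word p q)))).
Proof.
case: q => [|q] long.
- rewrite addn0 in long; case: p long => [|[|p]] // _.
  rewrite -[behead _]/(ab_word p.+1 0) [in front _]ab_word_a front_rcons.
  rewrite window_ab_word // step_ab_word [block_cell _ _]row_start row_start.
  by case: p => [|p] //; rewrite window_ab_word // [block_cell _ _]row_start.
- rewrite ab_word_b front_rcons -ab_word_b.
  case: p long => [|p] long.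
  + by case: q long => [|[|q]] // _; rewrite !window_ab_word.
  + rewrite -[behead _]/(ab_word p q.+1) signal_ab_word // step_ab_word.
    by rewrite window_ab_word // -row_next.
Qed.

(* Unsorted windows are garbage, detected at the "ba" factor. *)
Lemma window_rec u : 2 <= size u ->
  window_state u = cell_step (window_state (front u)) (cell_signal (window_state (behead u))).
Proof.
move=> long; case sorted_u: (sorted ab_le u).
  rewrite (sorted_ab_wordE sorted_u) window_rec_ab_word //.
  by rewrite -size_ab_word -sorted_ab_wordE.
rewrite window_state_long // sorted_u.
case: u long sorted_u => [|x [|y [|z s]]] //; first by case: x; case: y.
move=> _ /=; rewrite /front /=.
case: (ab_le x y) => /= unsorted //.
by rewrite unsorted cell_step_garbage.
Qed.

(* The automaton *)

(* A state is the content of the cell's window, together with a flag telling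
   that the right border has been reached (the window is then padded by a
   copy of the last letter); [None] once the cell is no longer needed. *)
Definition state : Type := option (cell * bool).

Definition state_signal (s : state) : option (option signal * bool) :=
  match s with
  | Some (c, false) => omap (fun m => (Some m, false)) (cell_signal c)
  | Some (c, true) => Some (cell_signal c, true)
  | None => None
  end.

(* One step of a state; the left input is ignored (one-way array).  The
   rightmost cell pads its window by receiving its own signal with #. *)
Definition state_step (_ : msg (option signal * bool)) (s : state)
    (r : msg (option signal * bool)) : state :=
  match s, r with
  | Some (c, false), Hash => Some (cell_step c (cell_signal c), true)
  | Some (c, false), Sym (m, e) => Some (cell_step c m, e)
  | Some (c, false), Bot => Some (cell_step c None, false)
  | _, _ => None
  end.

Definition fires_G (c : cell) : bool :=
  if cell_signal c is Some (SigEvents g _ _) then g else false.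

Definition state_accepts (s : state) : bool :=
  if s is Some (c, true) then fires_G c else false.

Definition letter_state (x : ab) : state := Some (letter_cell x, false).

Lemma letter_state_inj : injective letter_state.
Proof. by case; case. Qed.

Definition L1_oca : CA ab := {|
  st := option (cell * bool); bsym := (option signal * bool)%type;
  acc := state_accepts; inp := letter_state; inp_inj := letter_state_inj;
  bl := state_signal; br := fun _ => None; delta := state_step |}.

Lemma acc_L1_oca s : acc L1_oca s = state_accepts s.
Proof. by []. Qed.

(* The light-cone invariant: the state of cell i at time t. *)
Definition expected (w : seq ab) (t i : nat) : state :=
  if i + t < size w then Some (window_state (take t.+1 (drop i w)), false)
  else if i + t == size w then Some (window_state (rcons (drop i w) (last ab_a w)), true)
  else None.

Lemma expected_step_inner w t i : i + t.+1 < size w ->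
  state_step Bot (expected w t i) (lift_msg (state_signal (expected w t i.+1))) =
  expected w t.+1 i.
Proof.
move=> inner; rewrite /expected.
have -> : i + t < size w by lia.
have -> : i + t.+1 < size w by lia.
have -> : i.+1 + t < size w by lia.
rewrite (@window_rec (take t.+2 (drop i w))) ?size_takel ?size_drop; try lia.
rewrite front_take ?behead_take ?behead_drop ?size_drop; try lia.
by rewrite /=; case: (cell_signal _).
Qed.

Lemma expected_step_border w t i : i + t.+1 = size w ->
  state_step Bot (expected w t i)
    (if i == (size w).-1 then Hash else lift_msg (state_signal (expected w t i.+1))) =
  expected w t.+1 i.
Proof.
move=> border; rewrite /expected.
have -> : i + t < size w by lia.
have -> : (i + t.+1 < size w) = false by lia.
have -> : i + t.+1 == size w by lia.
have -> : (i.+1 + t < size w) = false by lia.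
have -> : i.+1 + t == size w by lia.
rewrite take_oversize ?size_drop; last lia.
rewrite (@window_rec (rcons (drop i w) (last ab_a w))) ?size_rcons ?size_drop; try lia.
rewrite front_rcons; case: eqP => [last_cell|_]; last first.
  have nonempty : 0 < size (drop i w) by rewrite size_drop; lia.
  by rewrite -behead_drop; case: (drop i w) nonempty.
suff -> : drop i w = [:: last ab_a w] by [].
case: w border last_cell => [|x w']; first by rewrite addnS.
by move=> _ -> /=; rewrite drop_last_elem.
Qed.

Lemma expected_step_outer w t i l r : size w < i + t.+1 ->
  state_step l (expected w t i) r = expected w t.+1 i.
Proof.
move=> outer; rewrite /expected.
have -> : (i + t < size w) = false by lia.
have -> : (i + t.+1 < size w) = false by lia.
have -> : (i + t.+1 == size w) = false by lia.
by case: (i + t == size w).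
Qed.

Lemma conf_expected x w' t i : i < size (x :: w') ->
  conf L1_oca false x w' t i = expected (x :: w') t i.
Proof.
have sizeE : size (x :: w') = (size w').+1 by [].
elim: t i => [|t IH] i inside.
  by rewrite /expected addn0 inside (drop_nth x) //= take0.
have left_bot : left_in false (conf L1_oca false x w' t) t i = Bot.
  by rewrite /left_in; case: (i == 0).
rewrite /= left_bot IH // /right_in /=.
have [inner|[border|outer]] : i + t.+1 < size (x :: w') \/ i + t.+1 = size (x :: w') \/
                              size (x :: w') < i + t.+1 by lia.
- have -> : (i == size w') = false by lia.
  by rewrite IH ?expected_step_inner //; lia.
- rewrite -(expected_step_border border) /=; case: eqP => [last_cell|ne]; last by rewrite IH //; lia.
  by have -> : t = 0 by lia.
- exact: expected_step_outer.
Qed.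

Lemma accepts_expected w t :
  state_accepts (expected w t 0) = (t == size w) && fires_G (window_state (rcons w (last ab_a w))).
Proof. by rewrite /expected add0n drop0; case: ltngtP. Qed.

Lemma fires_G_ab_word p q : 0 < q -> fires_G (window_state (ab_word p q)) = (q == evG p).
Proof. by move=> q_gt0; rewrite /fires_G signal_ab_word // /signal_of; case: ifP; case: (q == evG p). Qed.

Lemma L1_ab_word n m : L1 (ab_word n m) <-> 0 < n /\ m = n + Nat.sqrt n.
Proof.
split=> [[k k_gt0 w_eq] | [n_gt0 ->]]; last by exists n.
by have [-> ->] := ab_word_inj w_eq.
Qed.

Lemma fires_G_padded w : 0 < size w ->
  fires_G (window_state (rcons w (last ab_a w))) <-> L1 w.
Proof.
move=> nonempty; case sorted_w: (sorted ab_le w); last first.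
  rewrite window_state_long ?size_rcons; last lia.
  rewrite (_ : sorted _ _ = false); last first.
    by apply/negP; rewrite -cats1 => /cat_sorted2 [sorted_w' _]; rewrite sorted_w' in sorted_w.
  by split=> // -[n _ w_eq]; move: sorted_w; rewrite w_eq (sorted_ab_word n).
move: nonempty; rewrite (sorted_ab_wordE sorted_w) size_ab_word L1_ab_word.
move: (count is_a w) (count (predC is_a) w) => n [|m] nonempty.
- case: n nonempty => [|n] // _.
  rewrite ab_word_a last_rcons -!ab_word_a window_ab_word // [block_cell _ _]row_start.
  by split=> // -[_]; lia.
- rewrite ab_word_b last_rcons -!ab_word_b fires_G_ab_word //.
  case: n {nonempty} => [|n]; first by split=> // -[].
  by rewrite /evG; split=> [/eqP e | [_ e]]; [split | apply/eqP]; lia.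
Qed.

Lemma accepts_within_L1 w T : accepts_within L1_oca false w T <-> size w <= T /\ L1 w.
Proof.
case: w => [|x w']; first by split=> // -[_ [[|n] //]].
rewrite -fires_G_padded //; split.
- by case=> t le_tT; rewrite acc_L1_oca conf_expected // accepts_expected => /andP[/eqP <- fires].
- case=> le_wT fires; exists (size w').+1; first exact: le_wT.
  by rewrite acc_L1_oca conf_expected // accepts_expected eqxx.
Qed.

(* Communication *)

Lemma count_le_size (T : eqType) (p : pred T) (s L : seq T) :
  uniq s -> (forall j, p j -> j \in L) -> count p s <= size L.
Proof.
move=> uniq_s sub; rewrite -size_filter; apply: uniq_leq_size; first exact: filter_uniq.
by move=> j; rewrite mem_filter => /andP[/sub].
Qed.

(* The times at which cell k of the word a^n b^m may signal: time 0, the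
   three event times of its row n-k, and when the right border reaches it. *)
Definition talk_times (n m k : nat) : seq nat :=
  [:: 0; (n - k) + evG (n - k) - 1; (n - k) + evB (n - k) - 1;
      (n - k) + evC (n - k) - 1; n + m - k].

Lemma signal_times n m k j : k < n + m ->
  isSome (state_signal (expected (ab_word n m) j k)) -> j \in talk_times n m k.
Proof.
move=> inside; rewrite /expected /talk_times size_ab_word.
case: ltngtP => [inner|//|border]; last by rewrite !inE (_ : j = n + m - k) ?eqxx ?orbT //; lia.
case: j inner => [|j] inner; first by rewrite inE eqxx.
rewrite drop_ab_word take_ab_word.
set p := minn _ _; set q := minn _ _ => /= signals.
have [p_gt0 q_gt0 events] : [/\ 0 < p, 0 < q & [|| q == evG p, q == evB p | q == evC p]].
  apply: signal_ab_word_events; first by rewrite /p /q; lia.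
  by move: signals; case: (cell_signal _).
have [p_eq j_eq] : p = n - k /\ j.+2 = p + q by rewrite /p /q; lia.
by rewrite -p_eq; case/or3P: events => /eqP ev; rewrite !inE -ev (_ : p + q - 1 = j.+1) ?eqxx ?orbT //; lia.
Qed.

Lemma mcom_ab_word n m : mcom L1_oca false (fun n => n) (ab_word n m) <= 5.
Proof.
rewrite /mcom; case E: (ab_word n m) => [//|x w'].
have size_nm : (size w').+1 = n + m by rewrite -size_ab_word E.
apply/bigmax_leqP => i _; rewrite /com.
apply: (@count_le_size _ _ _ (talk_times n m i.+1) (iota_uniq _ _)) => j /=.
rewrite conf_expected ?ltnS // -E; apply: signal_times; have := ltn_ord i; lia.
Qed.

Lemma L1_oca_accepts w : accepts L1_oca false w <-> L1 w.
Proof.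
split=> [[T /accepts_within_L1 []] // | L1w].
by exists (size w); apply/accepts_within_L1.
Qed.

Theorem mainTheorem1 :
  exists M : CA ab,
    is_OCA M /\
    realtime M false /\
    (exists c N0 : nat, forall w : seq ab,
        accepts M false w -> N0 <= size w -> mcom M false (fun n => n) w <= c) /\
    (forall w : seq ab, accepts M false w <-> L1 w).
Proof.
exists L1_oca; split; first by [].
split; first by move=> w /L1_oca_accepts L1w; apply/accepts_within_L1.
split; last exact: L1_oca_accepts.
by exists 5, 0 => w /L1_oca_accepts [n _ ->] _; apply: mcom_ab_word.
Qed.
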